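(* Let $T\ge2$ and let $n\ge 2T^2$ be an integer. For $|x|\le T$ define $\tilde E_n(x)$ by $$h_{2p}(x)=\frac{(-1)^p}{\sqrt\pi\,p^{1/4}}\cos\varphi_{2p}(x)+\tilde E_{2p}(x)\quad\text{if }n=2p\text{ is even},$$ $$h_{2p+1}(x)=\frac{(-1)^p}{\sqrt\pi\,p^{1/4}}\sin\varphi_{2p+1}(x)+\tilde E_{2p+1}(x)\quad\text{if }n=2p+1\text{ is odd}.$$ Then for all $|x|,|y|\le T$, $$|\tilde E_n(x)|\le\frac{2T^2}{(2n+1)^{5/4}}\qquad\text{and}\qquad|\tilde E_n(x)-\tilde E_n(y)|\le\frac{3T^2}{(2n+1)^{3/4}}|x-y|.$$
   Context: For an integer $n\ge0$, $H_n(x)=(-1)^n e^{x^2}\frac{d^n}{dx^n}e^{-x^2}$ is the $n$-th Hermite polynomial and $h_n(x)=\frac{1}{\pi^{1/4}\sqrt{2^n n!}}H_n(x)e^{-x^2/2}$ is the $n$-th Hermite function; $(h_n)_{n\ge0}$ is an orthonormal basis of $L^2(\mathbb R)$ and $h_n''(x)+(2n+1-x^2)h_n(x)=0$. For $|x|\le\sqrt{2n+1}$, $\varphi_n(x)=\int_0^x\sqrt{2n+1-t^2}\,dt$. *)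

From Stdlib Require Import Reals Lra ClassicalEpsilon Arith Factorial.
Open Scope R_scope.

(* Physicists' Hermite polynomials H_n, via the standard three-term recurrence
   H_0 = 1, H_1 = 2x, H_{n+2} = 2x H_{n+1} - 2(n+1) H_n
   (equivalent to the Rodrigues formula (-1)^n e^{x^2} d^n/dx^n e^{-x^2}). *)
Fixpoint hermiteH (n : nat) (x : R) : R :=
  match n with
  | O => 1
  | S m =>
      match m with
      | O => 2 * x
      | S k => 2 * x * hermiteH m x - 2 * INR m * hermiteH k x
      end
  end.

Definition hermite_fun (n : nat) (x : R) : R :=
  / (Rpower PI (1/4) * sqrt (2 ^ n * INR (fact n))) * hermiteH n x * exp (- x ^ 2 / 2).

(* The Riemann integral of f over [a,b] (oriented), when it exists;
   well defined since RiemannInt does not depend on the integrability proof. *)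
Definition Rint (f : R -> R) (a b : R) : R :=
  epsilon (inhabits 0)
    (fun v => exists pr : Riemann_integrable f a b, RiemannInt pr = v).

Definition phi (n : nat) (x : R) : R :=
  Rint (fun t => sqrt (2 * INR n + 1 - t ^ 2)) 0 x.

Definition Etilde (n : nat) (x : R) : R :=
  let p := Nat.div2 n in
  let c := (-1) ^ p / (sqrt PI * Rpower (INR p) (1/4)) in
  if Nat.even n then hermite_fun n x - c * cos (phi n x)
  else hermite_fun n x - c * sin (phi n x).

From Stdlib Require Import Reals Lra Lia Factorial ClassicalEpsilon.
From Coquelicot Require Import Coquelicot.
Open Scope R_scope.

(** Write [L = 2n+1]. The Hermite function [h = h_n] solves [h'' = -(L - x^2) h]. On [|x| <= T]
    the WKB function [g = C (L - x^2)^(-1/4) u], with [u = cos phi_n] or [sin phi_n], solves the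
    same equation up to a forcing term bounded by some [M = O(|c|/L)]. Choosing [C] so that [g]
    and [h] agree to first order at [0], the energy [e'^2 + (L - x^2) e^2] of [e = h - g] is at
    most [(M x)^2], which bounds [e] and [e']. It remains to compare [C (L - x^2)^(-1/4)] with the coefficient
    [c = (-1)^p / (sqrt pi p^(1/4))]: their fourth powers agree up to a relative error
    [4 T^2 / (3 L)], by Wallis' bounds on the central binomial coefficient. The Lipschitz bound
    follows from the corresponding derivative bound by the mean value theorem. *)

Lemma is_derive_Rmult (f g : R -> R) x a b : is_derive f x a -> is_derive g x b ->
  is_derive (fun t => f t * g t) x (a * g x + f x * b).
Proof.
  rewrite !is_derive_Reals; intros Ha Hb; exact (derivable_pt_lim_mult f g x a b Ha Hb).
Qed.

Lemma is_derive_Rplus (f g : R -> R) x a b : is_derive f x a -> is_derive g x b ->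
  is_derive (fun t => f t + g t) x (a + b).
Proof.
  rewrite !is_derive_Reals; intros Ha Hb; exact (derivable_pt_lim_plus f g x a b Ha Hb).
Qed.

Lemma is_derive_Rminus (f g : R -> R) x a b : is_derive f x a -> is_derive g x b ->
  is_derive (fun t => f t - g t) x (a - b).
Proof.
  rewrite !is_derive_Reals; intros Ha Hb; exact (derivable_pt_lim_minus f g x a b Ha Hb).
Qed.

Lemma is_derive_Rcomp (f g : R -> R) x a b : is_derive g x a -> is_derive f (g x) b ->
  is_derive (fun t => f (g t)) x (b * a).
Proof.
  rewrite !is_derive_Reals; intros Ha Hb; exact (derivable_pt_lim_comp g f x a b Ha Hb).
Qed.

Lemma is_derive_Rconst (c x : R) : is_derive (fun _ => c) x 0.
Proof. apply is_derive_Reals, derivable_pt_lim_const. Qed.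

Lemma is_derive_Rid (x : R) : is_derive (fun t => t) x 1.
Proof. apply is_derive_Reals, derivable_pt_lim_id. Qed.

Lemma is_derive_eq_deriv (f : R -> R) (x a b : R) : is_derive f x a -> a = b -> is_derive f x b.
Proof. now intros H <-. Qed.

(* Coquelicot states derivative identities in the carrier of [R_NormedModule]; [real_eq]
   retypes such a goal at [R] so that [ring] and [field] apply. *)
Ltac real_eq := match goal with |- ?a = ?b => change (@eq R a b) end.

Lemma continuity_pt_is_derive (f : R -> R) x l : is_derive f x l -> continuity_pt f x.
Proof.
  intros H; apply continuity_pt_filterlim, (ex_derive_continuous (V := R_NormedModule)).
  now exists l.
Qed.

Lemma MVT_in_interval (F dF : R -> R) (T a b : R) :
  (forall t, -T <= t <= T -> is_derive F t (dF t)) -> -T <= a <= T -> -T <= b <= T ->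
  exists c, Rmin a b <= c <= Rmax a b /\ -T <= c <= T /\ F b - F a = dF c * (b - a).
Proof.
  intros HF Ha Hb.
  assert (Hsub : forall t, Rmin a b <= t <= Rmax a b -> -T <= t <= T).
  { intros t Ht; split;
      [apply Rle_trans with (Rmin a b); [apply Rmin_glb|]|apply Rle_trans with (Rmax a b); [|apply Rmax_lub]];
      lra. }
  destruct (MVT_gen F a b dF) as [c [Hc Hmvt]].
  - intros t Ht; apply HF, Hsub; lra.
  - intros t Ht; apply (continuity_pt_is_derive _ _ (dF t)), HF, Hsub; lra.
  - exists c; auto.
Qed.

Lemma le_growth_of_one_sided_derive (F dF : R -> R) (M T x : R) :
  (forall t, -T <= t <= T -> is_derive F t (dF t)) ->
  (forall t, 0 <= t <= T -> dF t <= M) ->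
  (forall t, -T <= t <= 0 -> - M <= dF t) ->
  -T <= x <= T -> F x <= F 0 + M * Rabs x.
Proof.
  intros HF Hpos Hneg Hx.
  destruct (MVT_in_interval F dF T 0 x) as [c [Hc [_ Hmvt]]]; [exact HF|lra|exact Hx|].
  destruct (Rle_or_lt 0 x) as [H0x|Hx0].
  - rewrite Rmin_left, Rmax_right in Hc by lra.
    rewrite Rabs_right by lra; specialize (Hpos c ltac:(lra)); nra.
  - rewrite Rmin_right, Rmax_left in Hc by lra.
    rewrite Rabs_left by lra; specialize (Hneg c ltac:(lra)); nra.
Qed.

Lemma Rabs_sub_le_of_derive_bound (F dF : R -> R) (K T x y : R) :
  (forall t, -T <= t <= T -> is_derive F t (dF t) /\ Rabs (dF t) <= K) ->
  -T <= x <= T -> -T <= y <= T -> Rabs (F x - F y) <= K * Rabs (x - y).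
Proof.
  intros HF Hx Hy.
  destruct (MVT_in_interval F dF T y x) as [c [_ [Hc ->]]]; [apply HF|exact Hy|exact Hx|].
  rewrite Rabs_mult; apply Rmult_le_compat_r; [apply Rabs_pos|apply HF, Hc].
Qed.

Lemma pow_le_reg (a b : R) (n : nat) : 0 <= a -> 0 <= b -> a ^ S n <= b ^ S n -> a <= b.
Proof.
  intros Ha Hb H; destruct (Rle_or_lt a b) as [|Hba]; [assumption|exfalso].
  assert (Hlt : forall m, b ^ S m < a ^ S m).
  { induction m as [|m IH]; [simpl; lra|].
    change (b * b ^ S m < a * a ^ S m); pose proof (pow_le b (S m) Hb); nra. }
  specialize (Hlt n); lra.
Qed.

Lemma Rabs_sub_mul_pow3_le (a b : R) : 0 <= a -> 0 < b ->
  Rabs (a - b) * b ^ 3 <= Rabs (a ^ 4 - b ^ 4).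
Proof.
  intros Ha Hb.
  replace (a ^ 4 - b ^ 4) with ((a - b) * ((a + b) * (a ^ 2 + b ^ 2))) by ring.
  rewrite Rabs_mult, (Rabs_right ((a + b) * (a ^ 2 + b ^ 2))) by (apply Rle_ge; nra).
  apply Rmult_le_compat_l; [apply Rabs_pos|].
  assert (0 <= a * b ^ 2) by nra; simpl; nra.
Qed.

Lemma Rabs_pow4 (a : R) : Rabs a ^ 4 = a ^ 4.
Proof. replace (Rabs a ^ 4) with ((Rabs a ^ 2) ^ 2) by ring; rewrite pow2_abs; ring. Qed.

Lemma Rabs_le_1_of_sq_sum (a b : R) : a ^ 2 + b ^ 2 = 1 -> Rabs a <= 1.
Proof.
  intros H; apply Rabs_le; pose proof (pow2_ge_0 b); nra.
Qed.

Lemma Rabs_sub_same_sign (C c a : R) : 0 < C * c -> 0 < a ->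
  Rabs (C * a - c) = Rabs (Rabs C * a - Rabs c).
Proof.
  intros HCc Ha; destruct (Rlt_or_le 0 c) as [Hc|Hc].
  - assert (0 < C) by (apply (Rmult_lt_reg_r c); lra); rewrite (Rabs_right C), (Rabs_right c) by lra; reflexivity.
  - assert (c < 0) by (destruct Hc as [|E]; [lra|rewrite E, Rmult_0_r in HCc; lra]).
    assert (C < 0) by (apply (Rmult_lt_reg_r (- c)); nra); rewrite (Rabs_left C), (Rabs_left c) by lra.
    rewrite <- Rabs_Ropp; f_equal; ring.
Qed.

Lemma rel_error_le (L T rho q : R) : 4 * T ^ 2 < 3 * L -> 3 * L / 4 <= q <= L -> L - q <= T ^ 2 ->
  1 - 4 * T ^ 2 / (3 * L) <= rho <= 1 -> Rabs (rho * L / q - 1) <= 4 * T ^ 2 / (3 * L).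
Proof.
  intros HL Hq HqT Hrho; pose proof (pow2_ge_0 T).
  assert (Hq0 : 0 < q) by lra.
  assert (0 <= rho) by (enough (4 * T ^ 2 / (3 * L) <= 1) by lra;
    apply (Rmult_le_reg_r (3 * L)); [lra|]; field_simplify; lra).
  assert (Hup : rho * L / q - 1 <= (L - q) / q).
  { unfold Rdiv; rewrite Rmult_minus_distr_r, Rinv_r by lra; apply Rplus_le_compat_r.
    apply Rmult_le_compat_r; [apply Rlt_le, Rinv_0_lt_compat, Hq0|nra]. }
  assert (Hlow : rho <= rho * L / q).
  { apply (Rmult_le_reg_r q); [exact Hq0|]; field_simplify; nra. }
  assert ((L - q) / q <= 4 * T ^ 2 / (3 * L)).
  { apply (Rmult_le_reg_r (q * (3 * L))); [nra|]; field_simplify; nra. }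
  apply Rabs_le; lra.
Qed.

Lemma neg1_pow_sq (p : nat) : ((-1) ^ p) ^ 2 = 1.
Proof. rewrite <- pow_mult, Nat.mul_comm, pow_mult; replace ((-1) ^ 2) with 1 by ring; apply pow1. Qed.

Lemma neg1_pow_mult_pos (p : nat) (a b : R) : 0 < a -> 0 < b -> 0 < ((-1) ^ p * a) * ((-1) ^ p * b).
Proof.
  intros Ha Hb; replace (((-1) ^ p * a) * ((-1) ^ p * b)) with (((-1) ^ p) ^ 2 * (a * b)) by ring.
  rewrite neg1_pow_sq; nra.
Qed.

Lemma Rpower_quarter_pow4 (z : R) : 0 < z -> Rpower z (1/4) ^ 4 = z.
Proof.
  intros Hz; rewrite <- Rpower_pow, Rpower_mult by apply exp_pos.
  replace (1 / 4 * INR 4) with 1 by (simpl; field); apply Rpower_1, Hz.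
Qed.

Lemma Rpower_5_4 (z : R) : 0 < z -> Rpower z (5/4) = z * Rpower z (1/4).
Proof.
  intros Hz; replace (5/4) with (1 + 1/4) by field; rewrite Rpower_plus, Rpower_1 by exact Hz; reflexivity.
Qed.

Lemma Rpower_3_4 (z : R) : Rpower z (3/4) = Rpower z (1/4) ^ 3.
Proof.
  rewrite <- Rpower_pow, Rpower_mult by apply exp_pos; f_equal; simpl; field.
Qed.

(** * Hermite polynomials and functions *)

Fixpoint central_binom_ratio (p : nat) : R :=
  match p with
  | O => 1
  | S q => central_binom_ratio q * (2 * INR q + 1) / (2 * INR q + 2)
  end.

Lemma central_binom_ratio_pos (p : nat) : 0 < central_binom_ratio p.
Proof.
  induction p as [|p IH]; simpl; [lra|].
  pose proof (pos_INR p); apply Rdiv_lt_0_compat; nra.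
Qed.

Lemma central_binom_ratio_fact (p : nat) :
  central_binom_ratio p * 4 ^ p * INR (fact p) ^ 2 = INR (fact (2 * p)).
Proof.
  induction p as [|p IH]; [simpl; ring|].
  replace (2 * S p)%nat with (S (S (2 * p))) by lia.
  change (fact (S (S (2 * p)))) with (S (S (2 * p)) * (S (2 * p) * fact (2 * p)))%nat.
  change (fact (S p)) with (S p * fact p)%nat.
  rewrite !mult_INR, <- IH, !S_INR, mult_INR; pose proof (pos_INR p).
  simpl; field; lra.
Qed.

Lemma hermiteH_SS (n : nat) (x : R) :
  hermiteH (S (S n)) x = 2 * x * hermiteH (S n) x - 2 * INR (S n) * hermiteH n x.
Proof. reflexivity. Qed.

Definition hermiteH' (n : nat) (x : R) : R :=
  match n with O => 0 | S m => 2 * INR n * hermiteH m x end.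

Lemma hermiteH'_eq (n : nat) (x : R) : hermiteH' n x = 2 * x * hermiteH n x - hermiteH (S n) x.
Proof. destruct n; [simpl; ring|rewrite hermiteH_SS; simpl; ring]. Qed.

Lemma is_derive_hermiteH (n : nat) (x : R) : is_derive (hermiteH n) x (hermiteH' n x).
Proof.
  enough (is_derive (hermiteH n) x (hermiteH' n x) /\
          is_derive (hermiteH (S n)) x (hermiteH' (S n) x)) by tauto.
  induction n as [|n [IH IHS]]; split; try exact IHS.
  - apply is_derive_Rconst.
  - eapply is_derive_eq_deriv.
    + apply is_derive_scal, is_derive_Rid.
    + simpl; ring.
  - apply (is_derive_ext (fun t => 2 * t * hermiteH (S n) t - 2 * INR (S n) * hermiteH n t)).
    { intros t; symmetry; apply hermiteH_SS. }
    eapply is_derive_eq_deriv.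
    + apply is_derive_Rminus; [apply is_derive_Rmult|apply is_derive_scal; exact IH]; [|exact IHS].
      apply is_derive_scal, is_derive_Rid.
    + change (hermiteH' (S n) x) with (2 * INR (S n) * hermiteH n x).
      change (hermiteH' (S (S n)) x) with (2 * INR (S (S n)) * hermiteH (S n) x).
      rewrite hermiteH'_eq, (S_INR (S n)); ring.
Qed.

Lemma is_derive_hermiteH' (n : nat) (x : R) :
  is_derive (hermiteH' n) x (2 * x * hermiteH' n x - 2 * INR n * hermiteH n x).
Proof.
  destruct n as [|n].
  - eapply is_derive_eq_deriv; [apply is_derive_Rconst|simpl; ring].
  - eapply is_derive_eq_deriv; [apply is_derive_scal, is_derive_hermiteH|].
    change (hermiteH' (S n) x) with (2 * INR (S n) * hermiteH n x).
    rewrite hermiteH'_eq; ring.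
Qed.

Lemma hermiteH_at_0 (p : nat) :
  hermiteH (2 * p) 0 = (-1) ^ p * INR (fact (2 * p)) / INR (fact p) /\
  hermiteH (S (2 * p)) 0 = 0.
Proof.
  induction p as [|p [IH IHS]]; [simpl; split; field|].
  replace (2 * S p)%nat with (S (S (2 * p))) by lia.
  rewrite !hermiteH_SS, IH, IHS.
  change (fact (S (S (2 * p)))) with (S (S (2 * p)) * (S (2 * p) * fact (2 * p)))%nat.
  change (fact (S p)) with (S p * fact p)%nat.
  rewrite !mult_INR, !S_INR, mult_INR.
  assert (0 < INR (fact p)) by apply INR_fact_lt_0.
  pose proof (pos_INR p).
  split; [simpl; field; lra|ring].
Qed.

Definition hermite_norm (n : nat) : R := / (Rpower PI (1/4) * sqrt (2 ^ n * INR (fact n))).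

Definition hermite_fun' (n : nat) (x : R) : R :=
  hermite_norm n * (hermiteH' n x - x * hermiteH n x) * exp (- x ^ 2 / 2).

Lemma is_derive_gauss (x : R) : is_derive (fun t => exp (- t ^ 2 / 2)) x (- x * exp (- x ^ 2 / 2)).
Proof.
  auto_derive; [auto|real_eq].
  replace (- (x * (x * 1)) * / 2) with (- x ^ 2 / 2) by (unfold Rdiv; ring); field.
Qed.

Lemma is_derive_hermite_fun (n : nat) (x : R) : is_derive (hermite_fun n) x (hermite_fun' n x).
Proof.
  unfold hermite_fun, hermite_fun'; fold (hermite_norm n).
  eapply is_derive_eq_deriv.
  - apply is_derive_Rmult; [apply is_derive_scal, is_derive_hermiteH|apply is_derive_gauss].
  - cbv beta; ring.
Qed.

Lemma is_derive_hermite_fun' (n : nat) (x : R) :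
  is_derive (hermite_fun' n) x (- (2 * INR n + 1 - x ^ 2) * hermite_fun n x).
Proof.
  unfold hermite_fun, hermite_fun'; fold (hermite_norm n).
  eapply is_derive_eq_deriv.
  - apply is_derive_Rmult; [apply is_derive_scal, is_derive_Rminus|apply is_derive_gauss].
    + apply is_derive_hermiteH'.
    + apply is_derive_Rmult; [apply is_derive_Rid|apply is_derive_hermiteH].
  - cbv beta; ring.
Qed.

Lemma hermite_norm_pos (n : nat) : 0 < hermite_norm n.
Proof.
  apply Rinv_0_lt_compat, Rmult_lt_0_compat; [apply exp_pos|].
  apply sqrt_lt_R0, Rmult_lt_0_compat; [apply pow_lt; lra|apply INR_fact_lt_0].
Qed.

Lemma hermite_norm_pow4 (n : nat) :
  hermite_norm n ^ 4 * (PI * (2 ^ n * INR (fact n)) ^ 2) = 1.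
Proof.
  unfold hermite_norm.
  assert (HX : 0 < 2 ^ n * INR (fact n))
    by (apply Rmult_lt_0_compat; [apply pow_lt; lra|apply INR_fact_lt_0]).
  pose proof (Rpower_quarter_pow4 PI PI_RGT_0) as HQ.
  pose proof (sqrt_sqrt _ (Rlt_le _ _ HX)) as HS.
  pose proof (sqrt_lt_R0 _ HX); pose proof (exp_pos (1/4 * ln PI)).
  set (Q := Rpower PI (1/4)) in *; set (S := sqrt (2 ^ n * INR (fact n))) in *.
  rewrite <- HQ, <- HS; field; unfold Q, Rpower; lra.
Qed.

Lemma hermite_norm_S_pow4 (n : nat) :
  hermite_norm (S n) ^ 4 * (4 * INR (S n) ^ 2) = hermite_norm n ^ 4.
Proof.
  pose proof (hermite_norm_pow4 n) as Hn; pose proof (hermite_norm_pow4 (S n)) as HSn.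
  pose proof (INR_fact_lt_0 n); pose proof PI_RGT_0; pose proof (pos_INR n).
  assert (0 < 2 ^ n) by (apply pow_lt; lra).
  change (fact (S n)) with (S n * fact n)%nat in HSn; rewrite mult_INR, S_INR in *.
  assert (0 < PI * (2 ^ n * INR (fact n)) ^ 2) by (apply Rmult_lt_0_compat; [lra|apply pow_lt; nra]).
  apply (Rmult_eq_reg_r (PI * (2 ^ n * INR (fact n)) ^ 2)); [|lra].
  rewrite Hn; etransitivity; [|exact HSn]; simpl; ring.
Qed.

Definition hermite_peak (p : nat) : R := (-1) ^ p * INR (fact (2 * p)) / INR (fact p).

Lemma hermite_peak_pow4 (p : nat) :
  hermite_norm (2 * p) ^ 4 * hermite_peak p ^ 4 = central_binom_ratio p ^ 2 / PI.
Proof.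
  pose proof (hermite_norm_pow4 (2 * p)) as HK; pose proof (central_binom_ratio_fact p) as Hb.
  pose proof (INR_fact_lt_0 p); pose proof (INR_fact_lt_0 (2 * p)); pose proof PI_RGT_0.
  pose proof (neg1_pow_sq p) as Hs; pose proof (central_binom_ratio_pos p).
  rewrite pow_mult in HK; replace (2 ^ 2) with 4 in HK by ring.
  assert (0 < 4 ^ p) by (apply pow_lt; lra).
  unfold hermite_peak.
  set (K := hermite_norm (2 * p)) in *; set (F := INR (fact (2 * p))) in *.
  set (G := INR (fact p)) in *; set (Q := 4 ^ p) in *; set (s := (-1) ^ p) in *.
  assert (HK' : K ^ 4 = / (PI * (Q * F) ^ 2)).
  { assert (0 < PI * (Q * F) ^ 2) by (apply Rmult_lt_0_compat; [lra|apply pow_lt; nra]).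
    apply (Rmult_eq_reg_r (PI * (Q * F) ^ 2)); [rewrite HK; field|]; lra. }
  replace ((s * F / G) ^ 4) with ((s ^ 2) ^ 2 * F ^ 4 / G ^ 4) by (field; lra).
  rewrite HK', Hs, <- Hb; field; repeat split; lra.
Qed.

Lemma gauss_0 : exp (- 0 ^ 2 / 2) = 1.
Proof. replace (- 0 ^ 2 / 2) with 0 by field; apply exp_0. Qed.

Lemma hermite_fun_even_0 (p : nat) : hermite_fun (2 * p) 0 = hermite_norm (2 * p) * hermite_peak p.
Proof.
  unfold hermite_fun; fold (hermite_norm (2 * p)).
  rewrite (proj1 (hermiteH_at_0 p)), gauss_0; unfold hermite_peak; ring.
Qed.

Lemma hermite_fun'_even_0 (p : nat) : hermite_fun' (2 * p) 0 = 0.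
Proof.
  unfold hermite_fun'; destruct p as [|p]; [simpl; ring|].
  replace (2 * S p)%nat with (S (S (2 * p))) by lia.
  change (hermiteH' (S (S (2 * p))) 0) with (2 * INR (S (S (2 * p))) * hermiteH (S (2 * p)) 0).
  rewrite (proj2 (hermiteH_at_0 p)); ring.
Qed.

Lemma hermite_fun_odd_0 (p : nat) : hermite_fun (S (2 * p)) 0 = 0.
Proof. unfold hermite_fun; rewrite (proj2 (hermiteH_at_0 p)); ring. Qed.

Lemma hermite_fun'_odd_0 (p : nat) :
  hermite_fun' (S (2 * p)) 0 = hermite_norm (S (2 * p)) * (2 * INR (S (2 * p)) * hermite_peak p).
Proof.
  unfold hermite_fun'; change (hermiteH' (S (2 * p)) 0) with (2 * INR (S (2 * p)) * hermiteH (2 * p) 0).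
  rewrite (proj1 (hermiteH_at_0 p)), gauss_0; unfold hermite_peak; ring.
Qed.

(** * The phase [phi_n] *)

Lemma continuous_sqrt_quadratic (L t : R) : continuous (fun s => sqrt (L - s ^ 2)) t.
Proof. apply continuous_sqrt_comp, (ex_derive_continuous (fun s => L - s ^ 2)); auto_derive; auto. Qed.

Lemma ex_RInt_sqrt_quadratic (L a b : R) : ex_RInt (fun t => sqrt (L - t ^ 2)) a b.
Proof. apply (ex_RInt_continuous (V := R_CompleteNormedModule)); intros; apply continuous_sqrt_quadratic. Qed.

Lemma phi_eq_RInt (n : nat) (x : R) :
  phi n x = RInt (fun t => sqrt (2 * INR n + 1 - t ^ 2)) 0 x.
Proof.
  unfold phi, Rint.
  pose proof (ex_RInt_Reals_0 _ _ _ (ex_RInt_sqrt_quadratic (2 * INR n + 1) 0 x)) as pr.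
  destruct (epsilon_spec (inhabits 0)
    (fun v => exists pr : Riemann_integrable (fun t => sqrt (2 * INR n + 1 - t ^ 2)) 0 x,
       RiemannInt pr = v)) as [pr' <-].
  - exists (RiemannInt pr), pr; reflexivity.
  - symmetry; apply RInt_Reals.
Qed.

Lemma is_derive_phi (n : nat) (x : R) : is_derive (phi n) x (sqrt (2 * INR n + 1 - x ^ 2)).
Proof.
  apply (is_derive_ext (fun x => RInt (fun t => sqrt (2 * INR n + 1 - t ^ 2)) 0 x)).
  { intros t; symmetry; apply phi_eq_RInt. }
  apply (is_derive_RInt (fun t => sqrt (2 * INR n + 1 - t ^ 2)) _ 0 x).
  - apply filter_forall; intros b; apply (RInt_correct (V := R_CompleteNormedModule)), ex_RInt_sqrt_quadratic.
  - apply continuous_sqrt_quadratic.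
Qed.

Lemma phi_0 (n : nat) : phi n 0 = 0.
Proof. rewrite phi_eq_RInt; exact (RInt_point (V := R_CompleteNormedModule) _ _). Qed.

Lemma is_derive_cos_phi (n : nat) (x : R) :
  is_derive (fun z => cos (phi n z)) x (- sin (phi n x) * sqrt (2 * INR n + 1 - x ^ 2)).
Proof. apply (is_derive_Rcomp cos (phi n)); [apply is_derive_phi|apply is_derive_cos]. Qed.

Lemma is_derive_sin_phi (n : nat) (x : R) :
  is_derive (fun z => sin (phi n z)) x (cos (phi n x) * sqrt (2 * INR n + 1 - x ^ 2)).
Proof. apply (is_derive_Rcomp sin (phi n)); [apply is_derive_phi|apply is_derive_sin]. Qed.

(** * Wallis integrals *)

Definition wallis (n : nat) : R := RInt (fun t => sin t ^ n) 0 (PI / 2).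

Lemma continuous_sin_pow (n : nat) (t : R) : continuous (fun s => sin s ^ n) t.
Proof. apply (ex_derive_continuous (fun s => sin s ^ n)); auto_derive; auto. Qed.

Lemma is_RInt_wallis (n : nat) : is_RInt (fun t => sin t ^ n) 0 (PI / 2) (wallis n).
Proof.
  apply (RInt_correct (V := R_CompleteNormedModule)), (ex_RInt_continuous (V := R_CompleteNormedModule)).
  intros; apply continuous_sin_pow.
Qed.

Lemma wallis_SS (n : nat) : (INR n + 2) * wallis (S (S n)) = (INR n + 1) * wallis n.
Proof.
  set (F := fun t => - cos t * sin t ^ S n).
  set (f := fun t => (INR n + 2) * sin t ^ S (S n) - (INR n + 1) * sin t ^ n).
  (* integration by parts, packaged as [F' = f] via [cos^2 = 1 - sin^2] *)
  assert (HF : forall t, is_derive F t (f t)).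
  { intros t; unfold F, f; auto_derive; [auto|real_eq].
    change (match n with 0%nat => 1 | S _ => INR n + 1 end) with (INR (S n)).
    assert (Hsc : sin t ^ 2 + cos t ^ 2 = 1) by (rewrite <- (sin2_cos2 t); unfold Rsqr; ring).
    apply Rminus_diag_uniq; rewrite S_INR.
    transitivity ((INR n + 1) * sin t ^ n * (1 - (sin t ^ 2 + cos t ^ 2))); [simpl; ring|].
    rewrite Hsc; ring. }
  assert (Hf : is_RInt f 0 (PI / 2) (F (PI / 2) - F 0)).
  { apply (is_RInt_derive (V := R_CompleteNormedModule) F f); intros t _; [apply HF|].
    apply (ex_derive_continuous f); unfold f; auto_derive; auto. }
  pose proof (is_RInt_minus _ _ _ _ _ _
    (is_RInt_scal _ _ _ (INR n + 2) _ (is_RInt_wallis (S (S n))))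
    (is_RInt_scal _ _ _ (INR n + 1) _ (is_RInt_wallis n))) as Hdiff.
  pose proof (is_RInt_unique _ _ _ _ Hf) as E.
  rewrite (is_RInt_unique _ _ _ _ (Hdiff : is_RInt f 0 (PI / 2) _)) in E.
  unfold F in E; rewrite cos_PI2, sin_0 in E.
  unfold minus, plus, opp, scal in E; simpl in E; unfold mult in E; simpl in E.
  lra.
Qed.

Lemma wallis_0 : wallis 0 = PI / 2.
Proof. unfold wallis; simpl; rewrite (RInt_const (V := R_CompleteNormedModule)); compute; ring. Qed.

Lemma wallis_1 : wallis 1 = 1.
Proof.
  apply (is_RInt_unique (V := R_CompleteNormedModule)).
  replace 1 with (- cos (PI / 2) - - cos 0) by (rewrite cos_PI2, cos_0; ring).
  apply (is_RInt_derive (V := R_CompleteNormedModule) (fun t => - cos t)); intros t _.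
  - auto_derive; [auto|real_eq; ring].
  - apply continuous_sin_pow.
Qed.

Lemma wallis_S_le (n : nat) : wallis (S n) <= wallis n.
Proof.
  pose proof PI2_RGT_0.
  apply RInt_le; try (apply (ex_RInt_continuous (V := R_CompleteNormedModule)); intros; apply continuous_sin_pow); [lra|].
  intros t Ht.
  assert (Hsin : 0 <= sin t) by (apply sin_ge_0; lra).
  pose proof (SIN_bound t); pose proof (pow_le (sin t) n Hsin).
  simpl; nra.
Qed.

Lemma wallis_even_odd (p : nat) :
  wallis (2 * p) = central_binom_ratio p * (PI / 2) /\
  wallis (S (2 * p)) * ((2 * INR p + 1) * central_binom_ratio p) = 1.
Proof.
  induction p as [|p [IH IHS]]; [simpl; rewrite wallis_0, wallis_1; split; ring|].
  replace (2 * S p)%nat with (S (S (2 * p))) by lia.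
  pose proof (wallis_SS (2 * p)) as R1; pose proof (wallis_SS (S (2 * p))) as R2.
  rewrite S_INR in R2; rewrite mult_INR in R1, R2; replace (INR 2) with 2 in R1, R2 by (simpl; ring).
  pose proof (pos_INR p); pose proof (central_binom_ratio_pos p).
  rewrite S_INR; simpl central_binom_ratio; split.
  - apply (Rmult_eq_reg_l (2 * INR p + 2)); [|lra].
    rewrite R1, IH; field; lra.
  - assert (E : wallis (S (S (S (2 * p)))) = (2 * INR p + 2) / (2 * INR p + 3) * wallis (S (2 * p))).
    { apply (Rmult_eq_reg_l (2 * INR p + 3)); [|lra].
      replace (2 * INR p + 3) with (2 * INR p + 1 + 2) at 1 by ring.
      rewrite R2; field; lra. }
    rewrite E; transitivity (wallis (S (2 * p)) * ((2 * INR p + 1) * central_binom_ratio p)); [field; lra|exact IHS].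
Qed.

Lemma wallis_bounds (p : nat) :
  INR p / (INR p + 1/2) <= central_binom_ratio p ^ 2 * PI * INR p <= 1.
Proof.
  pose proof PI_RGT_0; pose proof (pos_INR p).
  pose proof (wallis_even_odd p) as [E IO]; pose proof (central_binom_ratio_pos p).
  split.
  - pose proof (wallis_S_le (2 * p)) as D; rewrite E in D.
    apply (Rmult_le_reg_r (2 * INR p + 1)); [lra|].
    replace (INR p / (INR p + 1/2) * (2 * INR p + 1)) with (2 * INR p) by (field; lra).
    assert (1 <= central_binom_ratio p * (PI / 2) * ((2 * INR p + 1) * central_binom_ratio p)).
    { rewrite <- IO at 1; apply Rmult_le_compat_r; nra. }
    nra.
  - destruct p as [|p]; [simpl; lra|].
    pose proof (wallis_S_le (S (2 * p))) as D.
    replace (S (S (2 * p))) with (2 * S p)%nat in D by lia.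
    rewrite E in D; destruct (wallis_even_odd p) as [_ IO'].
    pose proof (central_binom_ratio_pos p); pose proof (pos_INR p).
    simpl central_binom_ratio in *; rewrite S_INR in *.
    set (b := central_binom_ratio p) in *; set (m := INR p) in *.
    set (w := wallis (S (2 * p))) in *.
    replace ((b * (2 * m + 1) / (2 * m + 2)) ^ 2 * PI * (m + 1))
      with (b * (2 * m + 1) / (2 * m + 2) * (PI / 2) * ((2 * m + 1) * b)) by (field; lra).
    apply Rle_trans with (w * ((2 * m + 1) * b)); [apply Rmult_le_compat_r; nra|lra].
Qed.

Lemma rho_even_range (T p w : R) : 2 <= T -> 4 * T ^ 2 <= 4 * p ->
  p / (p + 1/2) <= w <= 1 -> 1 - 4 * T ^ 2 / (3 * (4 * p + 1)) <= w <= 1.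
Proof.
  intros HT Hp Hw; split; [|lra].
  assert (p / (p + 1/2) = 1 - 1 / (2 * p + 1)) by (field; nra).
  enough (1 / (2 * p + 1) <= 4 * T ^ 2 / (3 * (4 * p + 1))) by lra.
  assert (4 <= T ^ 2) by (simpl; nra).
  apply (Rmult_le_reg_r ((2 * p + 1) * (3 * (4 * p + 1)))); [nra|]; field_simplify; [nra|lra|lra].
Qed.

Lemma rho_odd_range (T p w : R) : 2 <= T -> 4 * T ^ 2 <= 4 * p + 2 ->
  p / (p + 1/2) <= w <= 1 ->
  1 - 4 * T ^ 2 / (3 * (4 * p + 3)) <= w * (4 * p + 2) ^ 2 / (4 * p + 3) ^ 2 <= 1.
Proof.
  intros HT Hp Hw; assert (0 <= p) by nra; assert (4 <= T ^ 2) by (simpl; nra).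
  assert (0 < (4 * p + 3) ^ 2) by nra.
  split.
  - apply Rle_trans with (p / (p + 1/2) * (4 * p + 2) ^ 2 / (4 * p + 3) ^ 2).
    + replace (p / (p + 1/2) * (4 * p + 2) ^ 2 / (4 * p + 3) ^ 2) with (1 - (16 * p + 9) / (4 * p + 3) ^ 2)
        by (field; lra).
      enough ((16 * p + 9) / (4 * p + 3) ^ 2 <= 4 * T ^ 2 / (3 * (4 * p + 3))) by lra.
      apply (Rmult_le_reg_r ((4 * p + 3) ^ 2 * (3 * (4 * p + 3)))); [nra|]; field_simplify; [|lra..].
      assert (0 <= (T ^ 2 - 4) * p ^ 2) by (apply Rmult_le_pos; [lra|apply pow2_ge_0]); nra.
    + unfold Rdiv; apply Rmult_le_compat_r; [apply Rlt_le, Rinv_0_lt_compat; lra|].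
      apply Rmult_le_compat_r; [apply pow2_ge_0|lra].
  - apply (Rmult_le_reg_r ((4 * p + 3) ^ 2)); [lra|]; field_simplify; nra.
Qed.

(** * Energy estimate *)

Section EnergyEstimate.

Variables (e e' f : R -> R) (L T M : R).
Hypothesis He : forall x, -T <= x <= T -> is_derive e x (e' x).
Hypothesis He' : forall x, -T <= x <= T -> is_derive e' x (f x - (L - x ^ 2) * e x).
Hypothesis Hf : forall x, -T <= x <= T -> Rabs (f x) <= M.
Hypothesis HL : forall x, -T <= x <= T -> 0 <= L - x ^ 2.
Hypothesis He0 : e 0 = 0.
Hypothesis He'0 : e' 0 = 0.

Definition energy (x : R) : R := e' x ^ 2 + (L - x ^ 2) * e x ^ 2.

Let energy_nonneg (x : R) : -T <= x <= T -> 0 <= energy x.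
Proof. intros Hx; unfold energy; pose proof (HL x Hx); nra. Qed.

Let is_derive_energy (x : R) : -T <= x <= T ->
  is_derive energy x (2 * e' x * f x - 2 * x * e x ^ 2).
Proof.
  intros Hx; unfold energy; eapply is_derive_eq_deriv.
  - apply is_derive_Rplus; [apply is_derive_pow, He', Hx|apply is_derive_Rmult].
    + apply is_derive_Rminus; [apply is_derive_Rconst|apply is_derive_pow, is_derive_Rid].
    + apply is_derive_pow, He, Hx.
  - simpl; ring.
Qed.

Let energy_sqrt_le (x eps : R) : -T <= x <= T -> 0 < eps ->
  sqrt (energy x) <= eps + M * Rabs x.
Proof.
  intros Hx Heps.
  (* [sqrt energy] need not be differentiable where the energy vanishes, hence the shift. *)
  set (G := fun t => sqrt (energy t + eps ^ 2)).
  set (dG := fun t => (2 * e' t * f t - 2 * t * e t ^ 2) / (2 * G t)).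
  assert (HG : forall t, -T <= t <= T -> 0 < G t /\ Rabs (e' t) <= G t).
  { intros t Ht; pose proof (energy_nonneg t Ht); pose proof (HL t Ht).
    split; [apply sqrt_lt_R0; nra|].
    rewrite <- sqrt_Rsqr_abs; apply sqrt_le_1_alt; unfold Rsqr, energy; nra. }
  assert (HdG : forall t, -T <= t <= T -> -(2 * G t * M) <= 2 * e' t * f t <= 2 * G t * M).
  { intros t Ht; destruct (HG t Ht) as [_ He't]; pose proof (Hf t Ht).
    pose proof (Rabs_pos (e' t)); pose proof (Rabs_pos (f t)).
    assert (Hprod : Rabs (e' t * f t) <= G t * M) by (rewrite Rabs_mult; apply Rmult_le_compat; assumption).
    apply Rabs_le_between in Hprod; lra. }
  assert (Hgrowth : G x <= G 0 + M * Rabs x).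
  { apply (le_growth_of_one_sided_derive G dG M T x); [|intros t Ht..|exact Hx].
    - intros t Ht; apply (is_derive_sqrt (fun t => energy t + eps ^ 2)).
      + eapply is_derive_eq_deriv; [apply is_derive_Rplus; [apply is_derive_energy, Ht|apply is_derive_Rconst]|ring].
      + pose proof (energy_nonneg t Ht); pose proof (pow_lt eps 2 Heps); lra.
    - assert (Ht' : -T <= t <= T) by lra; destruct (HG t Ht') as [HGt _]; pose proof (HdG t Ht').
      unfold dG; apply Rmult_le_reg_r with (2 * G t); [lra|].
      field_simplify; [|lra]; pose proof (pow2_ge_0 (e t)); nra.
    - assert (Ht' : -T <= t <= T) by lra; destruct (HG t Ht') as [HGt _]; pose proof (HdG t Ht').
      unfold dG; apply Rmult_le_reg_r with (2 * G t); [lra|].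
      field_simplify; [|lra]; pose proof (pow2_ge_0 (e t)); nra. }
  assert (HG0 : G 0 = eps).
  { unfold G, energy; rewrite He0, He'0; replace (_ + _ + eps ^ 2) with (eps ^ 2) by ring.
    apply sqrt_pow2; lra. }
  assert (sqrt (energy x) <= G x) by (apply sqrt_le_1_alt; pose proof (pow2_ge_0 eps); lra).
  lra.
Qed.

Lemma energy_le (x : R) : -T <= x <= T -> energy x <= (M * x) ^ 2.
Proof.
  intros Hx.
  assert (Hs : sqrt (energy x) <= M * Rabs x).
  { apply Rle_plus_epsilon; intros eps Heps; rewrite Rplus_comm; apply energy_sqrt_le; assumption. }
  rewrite <- (sqrt_sqrt _ (energy_nonneg x Hx)), Rpow_mult_distr, <- (pow2_abs x).
  pose proof (sqrt_pos (energy x)); simpl; nra.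
Qed.

End EnergyEstimate.

(** * Comparison with the WKB approximation *)

Definition amplitude (L x : R) : R := Rpower (L - x ^ 2) (- (1/4)).
Definition amplitude' (L x : R) : R := amplitude L x * x / (2 * (L - x ^ 2)).
Definition amplitude'' (L x : R) : R :=
  amplitude L x * (2 * (L - x ^ 2) + 5 * x ^ 2) / (4 * (L - x ^ 2) ^ 2).

Lemma amplitude_pos (L x : R) : 0 < amplitude L x.
Proof. apply exp_pos. Qed.

Lemma amplitude_pow4 (L x : R) : x ^ 2 < L -> amplitude L x ^ 4 = / (L - x ^ 2).
Proof.
  intros Hx; unfold amplitude; rewrite <- Rpower_pow, Rpower_mult by apply exp_pos.
  replace (- (1/4) * INR 4) with (Ropp 1) by (simpl; field).
  rewrite Rpower_Ropp, Rpower_1 by lra; reflexivity.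
Qed.

Lemma is_derive_amplitude (L x : R) : x ^ 2 < L -> is_derive (amplitude L) x (amplitude' L x).
Proof.
  intros Hx; unfold amplitude', amplitude, Rpower; auto_derive; [lra|real_eq].
  replace (L + - (x * (x * 1))) with (L - x ^ 2) by ring; field; lra.
Qed.

Lemma is_derive_amplitude' (L x : R) : x ^ 2 < L -> is_derive (amplitude' L) x (amplitude'' L x).
Proof.
  intros Hx; apply (is_derive_ext (fun t => amplitude L t * (t / (2 * (L - t ^ 2))))).
  { intros t; unfold amplitude'; real_eq; unfold Rdiv; ring. }
  eapply is_derive_eq_deriv; [apply is_derive_Rmult; [apply is_derive_amplitude, Hx|]|].
  - auto_derive; [lra|reflexivity].
  - unfold amplitude', amplitude''; field; lra.
Qed.

Section Comparison.

Variables (T L C c : R) (h h' u w : R -> R).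
Hypothesis HT : 2 <= T.
Hypothesis HL : 4 * T ^ 2 + 1 <= L.
Hypothesis Hh : forall x, is_derive h x (h' x).
Hypothesis Hh' : forall x, is_derive h' x (- (L - x ^ 2) * h x).
Hypothesis Hu : forall x, is_derive u x (w x * sqrt (L - x ^ 2)).
Hypothesis Hw : forall x, is_derive w x (- u x * sqrt (L - x ^ 2)).
Hypothesis Huw : forall x, u x ^ 2 + w x ^ 2 = 1.
Hypothesis Hh0 : h 0 = C * amplitude L 0 * u 0.
(* Since [amplitude' L 0 = 0], this says that [h'] and [g'] agree at [0]. *)
Hypothesis Hh'0 : h' 0 = C * amplitude L 0 * w 0 * sqrt L.
Hypothesis HCc : 0 < C * c.
Hypothesis Hrho : 1 - 4 * T ^ 2 / (3 * L) <= C ^ 4 / (c ^ 4 * L) <= 1.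
Hypothesis Hc4 : c ^ 4 * L <= 55 / 100.

Let L_ge_17 : 17 <= L.
Proof. nra. Qed.

Let quadratic_bounds (x : R) : -T <= x <= T -> x ^ 2 <= T ^ 2 /\ 3 * L / 4 <= L - x ^ 2.
Proof. intros Hx; assert (x ^ 2 <= T ^ 2) by (simpl; nra); split; nra. Qed.

Let g (x : R) : R := C * amplitude L x * u x.
Let g' (x : R) : R := C * (amplitude' L x * u x + amplitude L x * w x * sqrt (L - x ^ 2)).

Let is_derive_g (x : R) : -T <= x <= T -> is_derive g x (g' x).
Proof.
  intros Hx; destruct (quadratic_bounds x Hx); pose proof L_ge_17; unfold g, g'; eapply is_derive_eq_deriv.
  - apply is_derive_Rmult; [apply is_derive_scal, is_derive_amplitude; lra|apply Hu].
  - cbv beta; ring.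
Qed.

Let is_derive_g' (x : R) : -T <= x <= T ->
  is_derive g' x (C * amplitude'' L x * u x - (L - x ^ 2) * g x).
Proof.
  intros Hx; destruct (quadratic_bounds x Hx); pose proof L_ge_17.
  assert (Hs : 0 < sqrt (L - x ^ 2)) by (apply sqrt_lt_R0; lra).
  assert (Hs2 : sqrt (L - x ^ 2) * sqrt (L - x ^ 2) = L - x ^ 2) by (apply sqrt_sqrt; lra).
  assert (Hds : is_derive (fun t => sqrt (L - t ^ 2)) x (- x / sqrt (L - x ^ 2))).
  { apply (is_derive_eq_deriv _ _ (- (2 * x) / (2 * sqrt (L - x ^ 2)))); [|field; lra].
    apply (is_derive_sqrt (fun t => L - t ^ 2)); [auto_derive; [auto|real_eq; ring]|lra]. }
  unfold g, g'; eapply is_derive_eq_deriv.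
  - apply is_derive_scal, is_derive_Rplus; apply is_derive_Rmult.
    + apply is_derive_amplitude'; lra.
    + apply Hu.
    + apply is_derive_Rmult; [apply is_derive_amplitude; lra|apply Hw].
    + exact Hds.
  - unfold amplitude', amplitude''; cbv beta.
    set (s := sqrt (L - x ^ 2)) in *; rewrite <- Hs2; field; lra.
Qed.

Let B : R := Rabs c.
Let k : R := 4 * T ^ 2 / (3 * L).

Let c_neq_0 : c <> 0.
Proof. intros E; rewrite E, Rmult_0_r in HCc; lra. Qed.

Let B_pos : 0 < B.
Proof. apply Rabs_pos_lt, c_neq_0. Qed.

Let k_le : k <= 1 / 3.
Proof.
  pose proof L_ge_17; unfold k; apply (Rmult_le_reg_r (3 * L)); [lra|]; field_simplify; lra.
Qed.

Let scaled_amplitude_pow4_close (x : R) : -T <= x <= T ->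
  Rabs ((Rabs C * amplitude L x) ^ 4 - B ^ 4) <= k * B ^ 4.
Proof.
  intros Hx; destruct (quadratic_bounds x Hx); pose proof L_ge_17; pose proof B_pos.
  replace ((Rabs C * amplitude L x) ^ 4 - B ^ 4)
    with (B ^ 4 * (C ^ 4 / (c ^ 4 * L) * L / (L - x ^ 2) - 1)).
  2: { unfold B; rewrite Rpow_mult_distr, !Rabs_pow4, amplitude_pow4 by lra.
       field; repeat split; try lra; apply c_neq_0. }
  rewrite Rabs_mult, Rabs_right by (apply Rle_ge, pow_le; lra).
  rewrite Rmult_comm; apply Rmult_le_compat_r; [apply pow_le; lra|].
  apply rel_error_le; try lra; pose proof (pow2_ge_0 x); lra.
Qed.

Let scaled_amplitude_le (x : R) : -T <= x <= T -> Rabs C * amplitude L x <= 11 / 10 * B.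
Proof.
  intros Hx; pose proof B_pos; pose proof k_le; pose proof (amplitude_pos L x).
  apply (pow_le_reg _ _ 3); [apply Rmult_le_pos; [apply Rabs_pos|lra]|lra|].
  pose proof (scaled_amplitude_pow4_close x Hx) as Hclose; apply Rabs_le_between in Hclose.
  assert (0 <= B ^ 4) by (apply pow_le; lra).
  rewrite Rpow_mult_distr; nra.
Qed.

Let scaled_amplitude_close (x : R) : -T <= x <= T -> Rabs (C * amplitude L x - c) <= k * B.
Proof.
  intros Hx; pose proof B_pos; pose proof (amplitude_pos L x).
  rewrite (Rabs_sub_same_sign C c) by assumption; fold B.
  apply (Rmult_le_reg_r (B ^ 3)); [apply pow_lt; lra|].
  eapply Rle_trans; [apply Rabs_sub_mul_pow3_le; [apply Rmult_le_pos; [apply Rabs_pos|lra]|lra]|].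
  replace (k * B * B ^ 3) with (k * B ^ 4) by ring; apply scaled_amplitude_pow4_close, Hx.
Qed.

(* From [|C| amplitude <= 11/10 |c|] and [amplitude'' / amplitude <= 13 / (9 L)]. *)
Let M : R := 16 / 10 * B / L.

Let forcing_bound (x : R) : -T <= x <= T -> Rabs (- (C * amplitude'' L x * u x)) <= M.
Proof.
  intros Hx; destruct (quadratic_bounds x Hx) as [Hx2 Hq]; pose proof L_ge_17; pose proof B_pos.
  pose proof (scaled_amplitude_le x Hx); pose proof (amplitude_pos L x).
  pose proof (Rabs_le_1_of_sq_sum _ _ (Huw x)) as Hu1.
  set (q := L - x ^ 2) in *.
  assert (Hr : 0 <= (2 * q + 5 * x ^ 2) / (4 * q ^ 2) <= 13 / (9 * L)).
  { pose proof (pow2_ge_0 x); split; [apply Rdiv_le_0_compat; nra|].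
    apply (Rmult_le_reg_r (4 * q ^ 2 * (9 * L))); [nra|].
    field_simplify; [|lra|lra]; unfold q in *; simpl in *; nra. }
  rewrite Rabs_Ropp; unfold amplitude''; fold q.
  replace (C * (amplitude L x * (2 * q + 5 * x ^ 2) / (4 * q ^ 2)) * u x)
    with (C * amplitude L x * ((2 * q + 5 * x ^ 2) / (4 * q ^ 2)) * u x) by (field; lra).
  rewrite !Rabs_mult, (Rabs_right (amplitude L x)), (Rabs_right (_ / _)) by lra.
  apply Rle_trans with (11 / 10 * B * (13 / (9 * L)) * 1).
  - assert (0 <= Rabs C * amplitude L x) by (apply Rmult_le_pos; [apply Rabs_pos|lra]).
    apply Rmult_le_compat; [nra|apply Rabs_pos|apply Rmult_le_compat; lra|exact Hu1].
  - unfold M; apply (Rmult_le_reg_r (9 * L)); [lra|]; field_simplify; lra.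
Qed.

Let e (x : R) : R := h x - g x.
Let e' (x : R) : R := h' x - g' x.

Let error_energy_le (x : R) : -T <= x <= T -> e' x ^ 2 + (L - x ^ 2) * e x ^ 2 <= (M * x) ^ 2.
Proof.
  intros Hx; pose proof L_ge_17.
  apply (energy_le e e' (fun t => - (C * amplitude'' L t * u t)) L T M); try assumption.
  - intros t Ht; apply is_derive_Rminus; [apply Hh|apply is_derive_g, Ht].
  - intros t Ht; eapply is_derive_eq_deriv.
    + apply is_derive_Rminus; [apply Hh'|apply is_derive_g', Ht].
    + unfold e; ring.
  - intros t Ht; destruct (quadratic_bounds t Ht); lra.
  - unfold e, g; rewrite Hh0; ring.
  - unfold e', g'; rewrite Hh'0; unfold amplitude'; replace (L - 0 ^ 2) with L by ring; field; lra.
Qed.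

Let error_le (x : R) : -T <= x <= T -> Rabs (e x) <= 3 / 10 * T ^ 2 * B / L.
Proof.
  intros Hx; pose proof (error_energy_le x Hx) as HE; destruct (quadratic_bounds x Hx) as [Hx2 Hq].
  pose proof L_ge_17; pose proof B_pos.
  set (X := 3 / 10 * T ^ 2 * B / L).
  assert (HX : 0 <= X) by (unfold X; pose proof (pow2_ge_0 T); apply Rdiv_le_0_compat; nra).
  assert (HTM : T ^ 2 * M ^ 2 <= 3 * L / 4 * X ^ 2).
  { replace (T ^ 2 * M ^ 2) with (T ^ 2 * B ^ 2 / L ^ 2 * (256 / 100)) by (unfold M; field; lra).
    replace (3 * L / 4 * X ^ 2) with (T ^ 2 * B ^ 2 / L ^ 2 * (27 / 400 * T ^ 2 * L)) by (unfold X; field; lra).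
    apply Rmult_le_compat_l; [apply Rdiv_le_0_compat; [nra|apply pow_lt; lra]|nra]. }
  assert (HMx : (M * x) ^ 2 <= T ^ 2 * M ^ 2).
  { rewrite Rpow_mult_distr, Rmult_comm; apply Rmult_le_compat_r; [apply pow2_ge_0|exact Hx2]. }
  apply (pow_le_reg _ _ 1); [apply Rabs_pos|exact HX|].
  rewrite pow2_abs; pose proof (pow2_ge_0 (e' x)); pose proof (pow2_ge_0 (e x)); nra.
Qed.

Let error'_le (x : R) : -T <= x <= T -> Rabs (e' x) <= M * T.
Proof.
  intros Hx; pose proof (error_energy_le x Hx) as HE; destruct (quadratic_bounds x Hx) as [Hx2 Hq].
  pose proof L_ge_17; pose proof B_pos.
  assert (0 <= M) by (unfold M; apply Rdiv_le_0_compat; lra).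
  apply (pow_le_reg _ _ 1); [apply Rabs_pos|nra|].
  rewrite pow2_abs, !Rpow_mult_distr in *; pose proof (pow2_ge_0 (e x)); pose proof (pow2_ge_0 M); nra.
Qed.

Let B_quarter_root_le : B * Rpower L (1/4) <= 87 / 100.
Proof.
  pose proof L_ge_17; pose proof B_pos; pose proof (exp_pos (1/4 * ln L)).
  apply (pow_le_reg _ _ 3); [unfold Rpower in *; nra|lra|].
  rewrite Rpow_mult_distr, Rpower_quarter_pow4 by lra.
  unfold B; rewrite Rabs_pow4; lra.
Qed.

Let comparison_error_le (x : R) : -T <= x <= T ->
  Rabs (h x - c * u x) <= 2 * T ^ 2 / Rpower L (5/4).
Proof.
  intros Hx; pose proof L_ge_17; pose proof B_pos; pose proof B_quarter_root_le.
  pose proof (exp_pos (1/4 * ln L)) as Hl; fold (Rpower L (1/4)) in Hl.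
  rewrite Rpower_5_4 by lra.
  replace (h x - c * u x) with (e x + (C * amplitude L x - c) * u x) by (unfold e, g; ring).
  eapply Rle_trans; [apply Rabs_triang|]; rewrite Rabs_mult.
  pose proof (error_le x Hx); pose proof (scaled_amplitude_close x Hx).
  pose proof (Rabs_le_1_of_sq_sum _ _ (Huw x)); pose proof (Rabs_pos (u x)).
  pose proof (Rabs_pos (C * amplitude L x - c)).
  apply Rle_trans with (3 / 10 * T ^ 2 * B / L + k * B); [nra|].
  set (l := Rpower L (1/4)) in *.
  replace (3 / 10 * T ^ 2 * B / L + k * B) with (49 / 30 * T ^ 2 * (B * l) / (L * l)) by (unfold k; field; lra).
  unfold Rdiv; apply Rmult_le_compat_r; [left; apply Rinv_0_lt_compat; nra|].
  pose proof (pow2_ge_0 T); nra.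
Qed.

Let comparison_error' (x : R) : R :=
  e' x + C * amplitude' L x * u x + (C * amplitude L x - c) * (w x * sqrt (L - x ^ 2)).

Let is_derive_comparison_error (x : R) : -T <= x <= T ->
  is_derive (fun t => h t - c * u t) x (comparison_error' x).
Proof.
  intros Hx; eapply is_derive_eq_deriv; [apply is_derive_Rminus; [apply Hh|apply is_derive_scal, Hu]|].
  unfold comparison_error', e', g'; ring.
Qed.

Let amplitude'_term_le (x : R) : -T <= x <= T ->
  Rabs (C * amplitude' L x * u x) <= 11 / 10 * B * T / (2 * (3 * L / 4)).
Proof.
  intros Hx; destruct (quadratic_bounds x Hx) as [Hx2 Hq]; pose proof L_ge_17; pose proof B_pos.
  pose proof (scaled_amplitude_le x Hx); pose proof (amplitude_pos L x).
  pose proof (Rabs_le_1_of_sq_sum _ _ (Huw x)); pose proof (Rabs_pos (u x)).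
  assert (Hxa : Rabs x <= T) by (apply Rabs_le; lra).
  replace (C * amplitude' L x * u x) with (C * amplitude L x * (x / (2 * (L - x ^ 2))) * u x)
    by (unfold amplitude'; field; lra).
  rewrite !Rabs_mult, (Rabs_right (amplitude L x)) by lra; unfold Rdiv.
  rewrite Rabs_mult, Rabs_inv, (Rabs_right (2 * (L - x ^ 2))) by lra.
  assert (/ (2 * (L - x ^ 2)) <= / (2 * (3 * L / 4))) by (apply Rinv_le_contravar; lra).
  assert (0 < / (2 * (L - x ^ 2))) by (apply Rinv_0_lt_compat; lra).
  assert (0 <= Rabs C * amplitude L x) by (apply Rmult_le_pos; [apply Rabs_pos|lra]).
  pose proof (Rabs_pos x).
  apply Rle_trans with (11 / 10 * B * (T * / (2 * (3 * L / 4))) * 1); [|lra].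
  apply Rmult_le_compat; [|lra|apply Rmult_le_compat; [lra|nra|lra|apply Rmult_le_compat; lra]|lra].
  apply Rmult_le_pos; nra.
Qed.

Let comparison_error'_le (x : R) : -T <= x <= T ->
  Rabs (comparison_error' x) <= 3 * T ^ 2 / Rpower L (3/4).
Proof.
  intros Hx; destruct (quadratic_bounds x Hx) as [Hx2 Hq]; pose proof L_ge_17; pose proof B_pos.
  pose proof B_quarter_root_le; pose proof (Rpower_quarter_pow4 L ltac:(lra)) as Hl4.
  pose proof (exp_pos (1/4 * ln L)) as Hl; fold (Rpower L (1/4)) in Hl.
  rewrite Rpower_3_4; set (l := Rpower L (1/4)) in *.
  assert (Hl1 : 1 <= l) by (apply (pow_le_reg _ _ 3); lra).
  assert (Hs : sqrt (L - x ^ 2) <= l ^ 2).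
  { apply (pow_le_reg _ _ 3); [apply sqrt_pos|apply pow2_ge_0|].
    replace (sqrt (L - x ^ 2) ^ 4) with ((sqrt (L - x ^ 2) * sqrt (L - x ^ 2)) ^ 2) by ring.
    rewrite sqrt_sqrt by lra; replace ((l ^ 2) ^ 4) with ((l ^ 4) ^ 2) by ring; rewrite Hl4.
    apply pow_incr; pose proof (pow2_ge_0 x); lra. }
  assert (D3 : Rabs ((C * amplitude L x - c) * (w x * sqrt (L - x ^ 2))) <= k * B * l ^ 2).
  { rewrite !Rabs_mult, (Rabs_right (sqrt _)) by (apply Rle_ge, sqrt_pos).
    pose proof (scaled_amplitude_close x Hx); pose proof (sqrt_pos (L - x ^ 2)).
    assert (Hw1 : Rabs (w x) <= 1) by (apply (Rabs_le_1_of_sq_sum _ (u x)); rewrite Rplus_comm; apply Huw).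
    pose proof (Rabs_pos (w x)); pose proof (Rabs_pos (C * amplitude L x - c)).
    apply Rmult_le_compat; [lra|nra|lra|]; nra. }
  pose proof (error'_le x Hx) as D1; pose proof (amplitude'_term_le x Hx) as D2.
  unfold comparison_error'; eapply Rle_trans; [apply Rabs_triang|].
  eapply Rle_trans; [apply Rplus_le_compat_r, Rabs_triang|].
  apply Rle_trans with (B * l * (7 / 3 * T + 4 / 3 * T ^ 2 * l ^ 2) / (L * l)).
  { replace (B * l * (7 / 3 * T + 4 / 3 * T ^ 2 * l ^ 2) / (L * l))
      with (M * T + 11 / 10 * B * T / (2 * (3 * L / 4)) + k * B * l ^ 2) by (unfold M, k; field; lra).
    lra. }
  replace (3 * T ^ 2 / l ^ 3) with (3 * T ^ 2 * l ^ 2 / (L * l)) by (rewrite <- Hl4; field; lra).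
  unfold Rdiv; apply Rmult_le_compat_r; [left; apply Rinv_0_lt_compat; nra|].
  assert (1 <= l ^ 2) by nra; assert (0 <= B * l) by nra; nra.
Qed.

Lemma comparison_bounds (x y : R) : -T <= x <= T -> -T <= y <= T ->
  Rabs (h x - c * u x) <= 2 * T ^ 2 / Rpower L (5/4) /\
  Rabs ((h x - c * u x) - (h y - c * u y)) <= 3 * T ^ 2 / Rpower L (3/4) * Rabs (x - y).
Proof.
  intros Hx Hy; split; [apply comparison_error_le, Hx|].
  apply (Rabs_sub_le_of_derive_bound (fun t => h t - c * u t) comparison_error' _ T); [|exact Hx|exact Hy].
  intros t Ht; split; [apply is_derive_comparison_error|apply comparison_error'_le]; exact Ht.
Qed.

End Comparison.

(** * Even and odd Hermite functions *)

Definition asymptotic_coeff (p : nat) : R := (-1) ^ p / (sqrt PI * Rpower (INR p) (1/4)).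

Lemma Etilde_even (p : nat) (z : R) :
  Etilde (2 * p) z = hermite_fun (2 * p) z - asymptotic_coeff p * cos (phi (2 * p) z).
Proof. unfold Etilde; rewrite Nat.div2_double, Nat.even_mul; reflexivity. Qed.

Lemma Etilde_odd (p : nat) (z : R) :
  Etilde (S (2 * p)) z = hermite_fun (S (2 * p)) z - asymptotic_coeff p * sin (phi (S (2 * p)) z).
Proof. unfold Etilde; rewrite Nat.div2_succ_double, Nat.even_succ, Nat.odd_mul; reflexivity. Qed.

Lemma asymptotic_coeff_pow4 (p : nat) : (0 < p)%nat -> asymptotic_coeff p ^ 4 = / (PI ^ 2 * INR p).
Proof.
  intros Hp; apply lt_0_INR in Hp; pose proof PI_RGT_0 as Hpi.
  pose proof (sqrt_sqrt PI (Rlt_le _ _ Hpi)) as HS; pose proof (sqrt_lt_R0 _ Hpi).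
  pose proof (exp_pos (1/4 * ln (INR p))); pose proof (Rpower_quarter_pow4 (INR p) Hp) as R4.
  unfold asymptotic_coeff; set (r := Rpower (INR p) (1/4)) in *; set (s := sqrt PI) in *.
  rewrite <- R4, <- HS.
  replace (((-1) ^ p / (s * r)) ^ 4) with ((((-1) ^ p) ^ 2) ^ 2 / (s * s) ^ 2 / r ^ 4) by (field; unfold r, Rpower; lra).
  rewrite neg1_pow_sq; field; unfold r, Rpower; lra.
Qed.

Lemma asymptotic_coeff_pow4_mul_le (p : nat) (L : R) : 7 / 2 <= INR p -> L <= 4 * INR p + 3 ->
  asymptotic_coeff p ^ 4 * L <= 55 / 100.
Proof.
  intros Hp HL; rewrite asymptotic_coeff_pow4 by (apply INR_lt; simpl; lra).
  pose proof PI2_3_2 as Hpi; assert (9 <= PI ^ 2) by nra.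
  apply (Rmult_le_reg_r (PI ^ 2 * INR p)); [nra|].
  replace (/ (PI ^ 2 * INR p) * L * (PI ^ 2 * INR p)) with L by (field; lra); nra.
Qed.

Lemma hermite_peak_mul_coeff_pos (p : nat) (a : R) : 0 < a -> 0 < a * hermite_peak p * asymptotic_coeff p.
Proof.
  intros Ha; unfold hermite_peak, asymptotic_coeff.
  pose proof (INR_fact_lt_0 p); pose proof (INR_fact_lt_0 (2 * p)).
  pose proof (sqrt_lt_R0 _ PI_RGT_0); pose proof (exp_pos (1/4 * ln (INR p))).
  replace (a * ((-1) ^ p * INR (fact (2 * p)) / INR (fact p)) * ((-1) ^ p / (sqrt PI * Rpower (INR p) (1/4))))
    with (((-1) ^ p * (a * INR (fact (2 * p)) / INR (fact p))) * ((-1) ^ p * / (sqrt PI * Rpower (INR p) (1/4))))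
    by (field; unfold Rpower; lra).
  apply neg1_pow_mult_pos; [apply Rdiv_lt_0_compat; nra|apply Rinv_0_lt_compat; unfold Rpower; nra].
Qed.

Lemma even_scale_pow4 (p : nat) (L : R) : 0 < L ->
  (hermite_fun (2 * p) 0 / amplitude L 0) ^ 4 = central_binom_ratio p ^ 2 * L / PI.
Proof.
  intros HL; pose proof (amplitude_pos L 0); pose proof PI_RGT_0.
  rewrite hermite_fun_even_0.
  replace ((hermite_norm (2 * p) * hermite_peak p / amplitude L 0) ^ 4)
    with (hermite_norm (2 * p) ^ 4 * hermite_peak p ^ 4 / amplitude L 0 ^ 4) by (field; lra).
  rewrite hermite_peak_pow4, amplitude_pow4 by (simpl; lra); field; lra.
Qed.

Lemma odd_scale_pow4 (p : nat) (L : R) : 0 < L ->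
  (hermite_fun' (S (2 * p)) 0 / (amplitude L 0 * sqrt L)) ^ 4
  = (4 * INR p + 2) ^ 2 * central_binom_ratio p ^ 2 / (PI * L).
Proof.
  intros HL; pose proof (amplitude_pos L 0); pose proof PI_RGT_0.
  pose proof (sqrt_lt_R0 _ HL); pose proof (sqrt_sqrt _ (Rlt_le _ _ HL)) as HsL.
  assert (Hn : INR (S (2 * p)) = 2 * INR p + 1) by (rewrite S_INR, mult_INR; simpl; ring).
  rewrite hermite_fun'_odd_0.
  replace ((hermite_norm (S (2 * p)) * (2 * INR (S (2 * p)) * hermite_peak p) / (amplitude L 0 * sqrt L)) ^ 4)
    with (hermite_norm (S (2 * p)) ^ 4 * (4 * INR (S (2 * p)) ^ 2) * hermite_peak p ^ 4
          * (4 * INR (S (2 * p)) ^ 2) / amplitude L 0 ^ 4 / (sqrt L * sqrt L) ^ 2) by (field; lra).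
  rewrite hermite_norm_S_pow4, hermite_peak_pow4, amplitude_pow4, HsL, Hn by (simpl; lra); field; lra.
Qed.

Lemma Etilde_even_bounds (T : R) (p : nat) : 2 <= T -> 2 * T ^ 2 <= INR (2 * p) ->
  forall x y : R, -T <= x <= T -> -T <= y <= T ->
    Rabs (Etilde (2 * p) x) <= 2 * T ^ 2 / Rpower (2 * INR (2 * p) + 1) (5/4) /\
    Rabs (Etilde (2 * p) x - Etilde (2 * p) y) <=
      3 * T ^ 2 / Rpower (2 * INR (2 * p) + 1) (3/4) * Rabs (x - y).
Proof.
  intros HT Hn x y Hx Hy; rewrite !Etilde_even.
  set (n := (2 * p)%nat) in *; set (L := 2 * INR n + 1).
  assert (Hp : 2 * T ^ 2 <= 2 * INR p) by (unfold n in Hn; rewrite mult_INR in Hn; exact Hn).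
  assert (HLp : L = 4 * INR p + 1) by (unfold L, n; rewrite mult_INR; simpl; ring).
  assert (HT2 : 4 <= T ^ 2) by (simpl; nra).
  pose proof (amplitude_pos L 0); pose proof PI_RGT_0.
  set (c := asymptotic_coeff p); set (C := hermite_fun n 0 / amplitude L 0).
  set (u := fun z => cos (phi n z)); set (w := fun z => - sin (phi n z)).
  change (cos (phi n x)) with (u x); change (cos (phi n y)) with (u y).
  apply (comparison_bounds T L C c (hermite_fun n) (hermite_fun' n) u w); try assumption.
  - lra.
  - intros z; apply is_derive_hermite_fun.
  - intros z; apply is_derive_hermite_fun'.
  - intros z; apply is_derive_cos_phi.
  - intros z; eapply is_derive_eq_deriv; [apply (is_derive_opp (fun z => sin (phi n z))), is_derive_sin_phi|].
    unfold u, L, opp; simpl; ring.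
  - intros z; unfold u, w; pose proof (sin2_cos2 (phi n z)); unfold Rsqr in *; simpl; lra.
  - unfold u, C; rewrite phi_0, cos_0; field; lra.
  - unfold w, n; rewrite phi_0, sin_0, hermite_fun'_even_0; ring.
  - unfold C, n; rewrite hermite_fun_even_0.
    replace (hermite_norm (2 * p) * hermite_peak p / amplitude L 0 * c)
      with (hermite_norm (2 * p) / amplitude L 0 * hermite_peak p * c) by (field; lra).
    apply hermite_peak_mul_coeff_pos, Rdiv_lt_0_compat; [apply hermite_norm_pos|lra].
  - unfold C, n, c; rewrite even_scale_pow4, asymptotic_coeff_pow4 by (try apply INR_lt; simpl; lra).
    replace (central_binom_ratio p ^ 2 * L / PI / (/ (PI ^ 2 * INR p) * L))
      with (central_binom_ratio p ^ 2 * PI * INR p) by (field; repeat split; lra).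
    rewrite HLp; apply rho_even_range; [assumption|lra|apply wallis_bounds].
  - apply asymptotic_coeff_pow4_mul_le; lra.
Qed.

Lemma Etilde_odd_bounds (T : R) (p : nat) : 2 <= T -> 2 * T ^ 2 <= INR (S (2 * p)) ->
  forall x y : R, -T <= x <= T -> -T <= y <= T ->
    Rabs (Etilde (S (2 * p)) x) <= 2 * T ^ 2 / Rpower (2 * INR (S (2 * p)) + 1) (5/4) /\
    Rabs (Etilde (S (2 * p)) x - Etilde (S (2 * p)) y) <=
      3 * T ^ 2 / Rpower (2 * INR (S (2 * p)) + 1) (3/4) * Rabs (x - y).
Proof.
  intros HT Hn x y Hx Hy; rewrite !Etilde_odd.
  set (n := S (2 * p)) in *; set (L := 2 * INR n + 1).
  assert (HRn : INR n = 2 * INR p + 1) by (unfold n; rewrite S_INR, mult_INR; simpl; ring).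
  assert (HLp : L = 4 * INR p + 3) by (unfold L; rewrite HRn; ring).
  assert (HT2 : 4 <= T ^ 2) by (simpl; nra).
  pose proof (amplitude_pos L 0); pose proof PI_RGT_0.
  assert (HsL : 0 < sqrt L) by (apply sqrt_lt_R0; lra).
  set (c := asymptotic_coeff p); set (C := hermite_fun' n 0 / (amplitude L 0 * sqrt L)).
  set (u := fun z => sin (phi n z)); set (w := fun z => cos (phi n z)).
  change (sin (phi n x)) with (u x); change (sin (phi n y)) with (u y).
  apply (comparison_bounds T L C c (hermite_fun n) (hermite_fun' n) u w); try assumption.
  - lra.
  - intros z; apply is_derive_hermite_fun.
  - intros z; apply is_derive_hermite_fun'.
  - intros z; apply is_derive_sin_phi.
  - intros z; eapply is_derive_eq_deriv; [apply is_derive_cos_phi|unfold u, L; ring].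
  - intros z; unfold u, w; pose proof (sin2_cos2 (phi n z)); unfold Rsqr in *; simpl; lra.
  - unfold u, n; rewrite phi_0, sin_0, hermite_fun_odd_0; ring.
  - unfold w, C; rewrite phi_0, cos_0; field; lra.
  - unfold C, n; rewrite hermite_fun'_odd_0; fold n.
    replace (hermite_norm n * (2 * INR n * hermite_peak p) / (amplitude L 0 * sqrt L) * c)
      with (hermite_norm n * (2 * INR n) / (amplitude L 0 * sqrt L) * hermite_peak p * c) by (field; lra).
    pose proof (hermite_norm_pos n).
    apply hermite_peak_mul_coeff_pos, Rdiv_lt_0_compat; [apply Rmult_lt_0_compat; lra|nra].
  - unfold C, n, c; rewrite odd_scale_pow4, asymptotic_coeff_pow4 by (try apply INR_lt; simpl; lra).
    replace ((4 * INR p + 2) ^ 2 * central_binom_ratio p ^ 2 / (PI * L) / (/ (PI ^ 2 * INR p) * L))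
      with (central_binom_ratio p ^ 2 * PI * INR p * (4 * INR p + 2) ^ 2 / L ^ 2) by (field; repeat split; lra).
    rewrite HLp; apply rho_odd_range; [assumption|lra|apply wallis_bounds].
  - apply asymptotic_coeff_pow4_mul_le; lra.
Qed.

Theorem mainTheorem4 (T : R) (n : nat) :
  2 <= T -> 2 * T ^ 2 <= INR n ->
  forall x y : R, Rabs x <= T -> Rabs y <= T ->
    Rabs (Etilde n x) <= 2 * T ^ 2 / Rpower (2 * INR n + 1) (5/4) /\
    Rabs (Etilde n x - Etilde n y) <= 3 * T ^ 2 / Rpower (2 * INR n + 1) (3/4) * Rabs (x - y).
Proof.
  intros HT Hn x y Hx Hy; apply Rabs_le_between in Hx, Hy.
  destruct (Nat.Even_or_Odd n) as [[p ->]|[p ->]].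
  - apply Etilde_even_bounds; assumption.
  - rewrite Nat.add_1_r in *; apply Etilde_odd_bounds; assumption.
Qed.
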